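(* Let $X$ be a connected vertex-transitive cubic graph containing a cycle of length $3$. Then $1$ is a simple eigenvalue of $X$ if and only if $X\cong T(G)$ for some connected, bipartite, arc-transitive cubic multigraph $G$.
   Context: The truncation $T(G)$ of a cubic multigraph $G$ is the cubic graph obtained by replacing every vertex $v$ of $G$ by a triangle whose three vertices correspond to the three edge-ends at $v$, each edge $uv$ of $G$ giving an edge between the corresponding vertices of the triangles of $u$ and $v$. Eigenvalues are those of the adjacency matrix; simple means a $1$-dimensional eigenspace. *)

From mathcomp Require Import all_boot all_order all_algebra all_field.
Set Implicit Arguments. Unset Strict Implicit. Unset Printing Implicit Defensive.
Import GRing.Theory Num.Theory.
Local Open Scope ring_scope.

Definition simple_graph (T : finType) (e : rel T) : Prop :=
  symmetric e /\ irreflexive e.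

Definition cubic_graph (T : finType) (e : rel T) : Prop :=
  forall x : T, #|[set y | e x y]| = 3%N.

Definition connected_graph (T : finType) (e : rel T) : Prop :=
  forall x y : T, connect e x y.

Definition graph_aut (T : finType) (e : rel T) (f : T -> T) : Prop :=
  bijective f /\ forall x y, e (f x) (f y) = e x y.

Definition vertex_transitive (T : finType) (e : rel T) : Prop :=
  forall x y : T, exists f, graph_aut e f /\ f x = y.

Definition has_triangle (T : finType) (e : rel T) : Prop :=
  exists x y z : T, [/\ e x y, e y z & e z x].

Definition adjmx (T : finType) (e : rel T) : 'M[algC]_#|T| :=
  \matrix_(i, j) (e (enum_val i) (enum_val j))%:R.

Definition simple_eigenvalue (T : finType) (e : rel T) (a : algC) : Prop :=
  \rank (eigenspace (adjmx e) a) = 1%N.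

Definition graph_iso (T1 T2 : finType) (e1 : rel T1) (e2 : rel T2) : Prop :=
  exists f : T1 -> T2, bijective f /\ forall x y, e2 (f x) (f y) = e1 x y.

(* ---------- Multigraphs given by darts (edge-ends) ----------
   mg_vert d : the vertex at which the dart d sits;
   mg_alpha d : the other end of the edge containing d (fixed-point-free
   involution; a loop is an edge whose two darts sit at the same vertex). *)
Record mgraph := MGraph {
  mg_V : finType;
  mg_D : finType;
  mg_vert : mg_D -> mg_V;
  mg_alpha : mg_D -> mg_D }.

Definition cubic_mgraph (G : mgraph) : Prop :=
  [/\ involutive (@mg_alpha G),
      (forall d, mg_alpha d != d :> mg_D G) &
      forall v : mg_V G, #|[set d | mg_vert d == v]| = 3%N].

Definition mg_adj (G : mgraph) : rel (mg_V G) :=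
  fun u v => [exists d : mg_D G, (mg_vert d == u) && (mg_vert (mg_alpha d) == v)].

Definition mg_connected (G : mgraph) : Prop :=
  forall u v : mg_V G, connect (@mg_adj G) u v.

Definition mg_bipartite (G : mgraph) : Prop :=
  exists c : mg_V G -> bool,
    forall d : mg_D G, c (mg_vert d) != c (mg_vert (mg_alpha d)).

Definition mg_aut (G : mgraph) (fv : mg_V G -> mg_V G) (fd : mg_D G -> mg_D G) : Prop :=
  [/\ bijective fv, bijective fd,
      (forall d, mg_vert (fd d) = fv (mg_vert d)) &
      (forall d, mg_alpha (fd d) = fd (mg_alpha d))].

Definition mg_arc_transitive (G : mgraph) : Prop :=
  forall d d' : mg_D G, exists fv fd, mg_aut fv fd /\ fd d = d'.

(* truncation T(G): vertices are the darts; two darts are adjacent iff they are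
   distinct darts at the same vertex (triangle) or the two ends of one edge. *)
Definition trunc_adj (G : mgraph) : rel (mg_D G) :=
  fun d d' => ((d != d') && (mg_vert d == mg_vert d')) || (mg_alpha d == d').

From mathcomp Require Import all_boot all_order all_algebra all_field.
From mathcomp Require Import ring.
Set Implicit Arguments. Unset Strict Implicit. Unset Printing Implicit Defensive.
Import GRing.Theory Num.Theory.
Local Open Scope ring_scope.

(* If two triangles of X share an edge, vertex-transitivity puts every vertex
   in a K_4, and the eigenvalue equations on a K_4 force a 1-eigenvector to
   vanish. Otherwise every vertex lies in exactly one triangle; contracting the
   triangles exhibits X as T(G), with G connected and arc-transitive because X
   is connected and vertex-transitive.
   A 1-eigenvector g of T(G), indexed by darts, satisfies
   3 g(d) = 2 S(v) + S(w) along each edge vw with d at v, where S sums g over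
   the darts at a vertex. Summing over v shows that S is a (-3)-eigenvector
   of G, hence S(w) = -S(v) on every edge; so g is constant on the darts at
   each vertex and changes sign across each edge. On a connected G such
   functions form a space of dimension at most one, which is nonzero exactly
   when G is bipartite. *)

(* Column sums, because [eigenspace] consists of row vectors u with u A = a u. *)
Definition eigenfun (T : finType) (e : rel T) (a : algC) (f : T -> algC) :=
  forall y, \sum_x (e x y)%:R * f x = a * f y.

Section Eigenfunctions.
Variables (T : finType) (e : rel T) (a : algC).

Lemma eq_eigenfun f g : f =1 g -> eigenfun e a f -> eigenfun e a g.
Proof. by move=> fg ef y; rewrite -fg -ef; apply: eq_bigr => x _; rewrite fg. Qed.

Definition rowv_fun (u : 'rV[algC]_#|T|) x := u 0 (enum_rank x).
Definition fun_rowv (f : T -> algC) : 'rV[algC]_#|T| := \row_i f (enum_val i).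

Lemma fun_rowvK f : rowv_fun (fun_rowv f) =1 f.
Proof. by move=> x; rewrite /rowv_fun mxE enum_rankK. Qed.

Lemma sum_enum_val (F : T -> algC) : \sum_(i < #|T|) F (enum_val i) = \sum_x F x.
Proof.
rewrite (reindex enum_rank); first by apply: eq_bigr => x _; rewrite enum_rankK.
by exists enum_val => x _; rewrite ?enum_valK ?enum_rankK.
Qed.

Lemma eigenspace_eigenfun u :
  (u <= eigenspace (adjmx e) a)%MS <-> eigenfun e a (rowv_fun u).
Proof.
rewrite /eigenspace /rowv_fun; split=> [/sub_kermxP | uf].
  rewrite mulmxBr mul_mx_scalar => /eqP; rewrite subr_eq0 => /eqP/matrixP uA y.
  have := uA 0 (enum_rank y); rewrite !mxE => <-; rewrite -sum_enum_val.
  by apply: eq_bigr => i _; rewrite mxE enum_valK enum_rankK mulrC.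
apply/sub_kermxP; rewrite mulmxBr mul_mx_scalar; apply/eqP; rewrite subr_eq0.
apply/eqP/matrixP => i j; rewrite !mxE (ord1 i) -(enum_valK j) -uf -sum_enum_val.
by apply: eq_bigr => k _; rewrite !mxE !enum_valK mulrC.
Qed.

Lemma eigenfun_eigenspace f :
  eigenfun e a f -> (fun_rowv f <= eigenspace (adjmx e) a)%MS.
Proof.
by move=> ef; apply/eigenspace_eigenfun; apply: eq_eigenfun ef => x; rewrite fun_rowvK.
Qed.

Lemma rowv_fun_eq0 u : (exists x, rowv_fun u x != 0) <-> u != 0.
Proof.
split=> [[x] | nz_u]; first by apply: contraNneq => ->; rewrite /rowv_fun mxE.
have /existsP [j uj] : [exists j, u 0 j != 0].
  apply: contraR nz_u => /existsPn u0; apply/eqP/matrixP => i j.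
  by rewrite (ord1 i) mxE; apply/eqP; rewrite -[_ == _]negbK u0.
by exists (enum_val j); rewrite /rowv_fun enum_valK.
Qed.

Lemma simple_eigenvalueP :
  simple_eigenvalue e a <->
  exists f, [/\ eigenfun e a f, exists x, f x != 0 &
                forall g, eigenfun e a g -> exists c, forall x, g x = c * f x].
Proof.
rewrite /simple_eigenvalue; set E := eigenspace _ _; split.
- move=> rkE; set u := nz_row E.
  have nz_u : u != 0 by rewrite nz_row_eq0 -mxrank_eq0 rkE.
  have uE : (u <= E)%MS := nz_row_sub E.
  have /andP [_ Eu] : (u == E)%MS by rewrite -(mxrank_leqif_eq uE) rank_rV nz_u rkE.
  exists (rowv_fun u); split; [exact/eigenspace_eigenfun | exact/rowv_fun_eq0 |].
  move=> g /eigenfun_eigenspace/submx_trans/(_ Eu)/sub_rVP [c gu].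
  by exists c => x; rewrite -fun_rowvK gu /rowv_fun mxE.
- case=> f [ef nz_f fspan]; have fE := eigenfun_eigenspace ef.
  have nz_uf : fun_rowv f != 0.
    by apply/rowv_fun_eq0; case: nz_f => x; exists x; rewrite fun_rowvK.
  have Ef : (E <= fun_rowv f)%MS.
    apply/row_subP => i; have /eigenspace_eigenfun/fspan [c Ec] := row_sub i E.
    apply/sub_rVP; exists c; apply/rowP => j.
    by rewrite [RHS]mxE [X in c * X]mxE -Ec /rowv_fun enum_valK.
  have := mxrankS Ef; have := mxrankS fE; rewrite rank_rV nz_uf => rk_ge1 rk_le1.
  by apply/eqP; rewrite eqn_leq rk_ge1 rk_le1.
Qed.

End Eigenfunctions.

Section Isomorphism.
Variables (T1 T2 : finType) (e1 : rel T1) (e2 : rel T2).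

Lemma graph_iso_sym : graph_iso e1 e2 -> graph_iso e2 e1.
Proof.
case=> phi [[psi phiK psiK] hom]; exists psi; split; first by exists phi.
by move=> x y; rewrite -hom !psiK.
Qed.

Lemma eigenfun_iso (phi : T1 -> T2) :
  bijective phi -> (forall x y, e2 (phi x) (phi y) = e1 x y) ->
  forall a g, eigenfun e2 a g <-> eigenfun e1 a (g \o phi).
Proof.
move=> [psi phiK psiK] hom a g.
have reindex_phi (F : T2 -> algC) : \sum_(z : T2) F z = \sum_x F (phi x).
  by rewrite (reindex phi) //; exists psi => z _; rewrite ?phiK ?psiK.
split=> ef y; first by rewrite /= -ef reindex_phi; apply: eq_bigr => x _; rewrite hom.
by rewrite -[y]psiK -ef reindex_phi; apply: eq_bigr => x _; rewrite -hom psiK.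
Qed.

Lemma simple_eigenvalue_pullback a :
  graph_iso e1 e2 -> simple_eigenvalue e2 a -> simple_eigenvalue e1 a.
Proof.
case=> phi [bij_phi hom] /simple_eigenvalueP [f [ef [x nz_fx] fspan]].
have [psi phiK psiK] := bij_phi.
apply/simple_eigenvalueP; exists (f \o phi); split.
- by apply/(eigenfun_iso bij_phi hom).
- by exists (psi x); rewrite /= psiK.
- move=> g eg; have /fspan [c gc] : eigenfun e2 a (g \o psi).
    by apply/(eigenfun_iso bij_phi hom); apply: eq_eigenfun eg => y /=; rewrite phiK.
  by exists c => y; rewrite -gc /= phiK.
Qed.

End Isomorphism.

Lemma simple_eigenvalue_iso (T1 T2 : finType) (e1 : rel T1) (e2 : rel T2) a :
  graph_iso e1 e2 -> simple_eigenvalue e1 a <-> simple_eigenvalue e2 a.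
Proof.
move=> iso; split; apply: simple_eigenvalue_pullback => //; exact: graph_iso_sym.
Qed.

Lemma connect_invariant (T : finType) (r : rel T) (P : T -> Prop) :
  (forall x y, r x y -> P x -> P y) -> forall x y, connect r x y -> P x -> P y.
Proof.
move=> rP x y /connectP [p]; elim: p x => [|z p IHp] x /=; first by move=> _ ->.
by move=> /andP [rxz pz] y_last Px; apply: IHp pz y_last (rP _ _ rxz Px).
Qed.

Section Darts.
Variable G : mgraph.
Local Notation vt := (@mg_vert G).
Local Notation al := (@mg_alpha G).
Hypothesis alK : involutive al.

Lemma vertex_sums0_antisym (s : mg_V G -> algC) :
  (forall v, \sum_(d | vt d == v) (s v + s (vt (al d))) = 0) ->
  forall d, s (vt (al d)) = - s (vt d).
Proof.
(* sum_d |t d|^2 = 2 sum_v conj (s v) sum_(d at v) t d, since t (al d) = t d. *)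
move=> s0; pose t d := s (vt d) + s (vt (al d)).
have t_al d : t (al d) = t d by rewrite /t alK addrC.
have half_sum0 : \sum_d t d * (s (vt d))^* = 0.
  rewrite (partition_big vt xpredT) //=; apply: big1 => v _.
  rewrite (eq_bigr (fun d => (s v + s (vt (al d))) * (s v)^*)) => [|d /eqP <-] //.
  by rewrite -mulr_suml (eq_bigl (fun d => vt d == v)) // s0 mul0r.
have : \sum_d t d * (t d)^* = 0.
  rewrite (eq_bigr (fun d => t d * (s (vt d))^* + t (al d) * (s (vt (al d)))^*)).
    rewrite big_split /= [X in _ + X](reindex_inj (inv_inj alK)) /=.
    by under [X in _ + X]eq_bigr do rewrite !alK; rewrite half_sum0 addr0.
  by move=> d _; rewrite t_al -mulrDr -rmorphD.
move=> /(psumr_eq0P (fun d _ => mul_conjC_ge0 (t d))) tt0 d.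
apply/eqP; rewrite -addr_eq0 addrC.
by have /eqP := tt0 d isT; rewrite mulf_eq0 conjC_eq0 orbb.
Qed.

End Darts.

Section Truncation.
Variable G : mgraph.
Local Notation D := (mg_D G).
Local Notation vt := (@mg_vert G).
Local Notation al := (@mg_alpha G).
Hypothesis cubG : cubic_mgraph G.
Hypothesis loopless : forall d, vt (al d) != vt d.

Let alK : involutive al. Proof. by case: cubG. Qed.

Definition vsum (g : D -> algC) v := \sum_(d | vt d == v) g d.
Definition vert_const (g : D -> algC) := forall d d', vt d = vt d' -> g d = g d'.
Definition edge_odd (g : D -> algC) := forall d, g (al d) = - g d.

Lemma vsum_cst v (c : algC) : \sum_(d | vt d == v) c = c *+ 3.
Proof.
case: cubG => _ _ /(_ v) <-; rewrite sumr_const; congr (_ *+ _).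
by apply: eq_card => d; rewrite inE.
Qed.

Lemma trunc_adj_sum g d :
  \sum_d' (trunc_adj d' d)%:R * g d' = vsum g (vt d) - g d + g (al d).
Proof.
have adjE d' : (trunc_adj d' d)%:R =
    ((d' != d) && (vt d' == vt d))%:R + (d' == al d)%:R :> algC.
  rewrite /trunc_adj (inv_eq alK).
  have [-> | _] := eqVneq d' (al d); last by rewrite orbF addr0.
  by rewrite orbT (negbTE (loopless d)) andbF add0r.
under eq_bigr do rewrite adjE mulrDl.
rewrite big_split /= [X in _ + X](bigD1 (al d)) //= eqxx mul1r.
rewrite [X in _ + (_ + X)]big1 ?addr0 => [|d' /negbTE ->]; last by rewrite mul0r.
congr (_ + _); rewrite /vsum [in RHS](bigD1 d) //= addrAC subrr add0r.
rewrite big_mkcond [RHS]big_mkcond; apply: eq_bigr => d' _.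
by rewrite andbC; case: ifP; rewrite ?mul1r ?mul0r.
Qed.

Lemma trunc_eigen1P g :
  eigenfun (@trunc_adj G) 1 g <-> vert_const g /\ edge_odd g.
Proof.
have eigenE : eigenfun (@trunc_adj G) 1 g <->
    forall d, vsum g (vt d) - g d + g (al d) - g d = 0.
  split=> E d; first by rewrite -trunc_adj_sum E mul1r subrr.
  by apply/eqP; rewrite trunc_adj_sum mul1r -subr_eq0 E.
rewrite eigenE; split=> [E | [gc godd] d]; last first.
  have -> : vsum g (vt d) = g d *+ 3.
    by rewrite -(vsum_cst (vt d)); apply: eq_bigr => d' /eqP; apply: gc.
  by rewrite godd; ring.
(* The equations at d and at al d. *)
have g3 d : 3 * g d = 2 * vsum g (vt d) + vsum g (vt (al d)).
  apply/eqP; rewrite -subr_eq0; have := E (al d); rewrite alK.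
  have -> : 3 * g d - (2 * vsum g (vt d) + vsum g (vt (al d))) =
    - (2 * (vsum g (vt d) - g d + g (al d) - g d)
       + (vsum g (vt (al d)) - g (al d) + g d - g (al d))) by ring.
  by rewrite E => ->; rewrite mulr0 add0r oppr0.
have antisym := vertex_sums0_antisym alK (s := vsum g).
(* Summing g3 over the darts at v: vsum g is a (-3)-eigenvector of G. *)
have {}antisym d : vsum g (vt (al d)) = - vsum g (vt d).
  apply: antisym => v; rewrite big_split /= vsum_cst.
  rewrite (eq_bigr (fun d => 3 * g d - 2 * vsum g v)) => [|d' /eqP <-].
    by rewrite sumrB -mulr_sumr vsum_cst -/(vsum g v); ring.
  by rewrite g3; ring.
have g3' d : 3 * g d = vsum g (vt d) by rewrite g3 antisym; ring.
have three_unit : (3 : algC) != 0 by rewrite pnatr_eq0.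
split=> [d d' vtdd' | d]; apply: (mulfI three_unit); first by rewrite !g3' vtdd'.
by rewrite mulrN !g3' antisym.
Qed.

Lemma bipartite_sign_fun : mg_bipartite G ->
  exists g, [/\ vert_const g, edge_odd g & forall d, g d != 0].
Proof.
case=> c cE; exists (fun d => if c (vt d) then 1 else -1).
split=> [d d' -> // | d | d].
  by move: (cE d); case: (c _); case: (c _); rewrite ?opprK.
by case: ifP; rewrite ?oppr_eq0 oner_eq0.
Qed.

Hypothesis conn : mg_connected G.

Lemma edge_odd_sign g d0 : vert_const g -> edge_odd g ->
  forall d, g d = g d0 \/ g d = - g d0.
Proof.
move=> gc godd d.
pose P v := forall d, vt d = v -> g d = g d0 \/ g d = - g d0.
apply: (@connect_invariant _ _ P _ (vt d0) (vt d) (conn _ _)) => // [u v | d' /gc ->];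
  last by left.
case/existsP=> d' /andP [/eqP <- /eqP <-] Pu d'' /gc ->.
by rewrite godd; case: (Pu d' erefl) => ->; [right | left; rewrite opprK].
Qed.

Lemma edge_odd_bipartite g d0 :
  vert_const g -> edge_odd g -> g d0 != 0 -> mg_bipartite G.
Proof.
move=> gc godd nz_gd0.
have gN : - g d0 != g d0.
  apply: contra nz_gd0 => /eqP gN.
  have : g d0 *+ 2 == 0 by rewrite mulr2n -{1}gN addNr.
  by rewrite mulrn_eq0.
have colourE d : [exists d', (vt d' == vt d) && (g d' == g d0)] = (g d == g d0).
  by apply/existsP/idP => [[d' /andP [/eqP /gc <-]] // | gd]; exists d; rewrite eqxx.
exists (fun v => [exists d', (vt d' == v) && (g d' == g d0)]) => d.
rewrite !colourE godd; case: (edge_odd_sign d0 gc godd d) => ->.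
  by rewrite eqxx (negbTE gN).
by rewrite opprK eqxx (negbTE gN).
Qed.

Lemma edge_odd_unique g g0 d0 : vert_const g -> edge_odd g ->
  vert_const g0 -> edge_odd g0 -> g0 d0 != 0 ->
  exists c, forall d, g d = c * g0 d.
Proof.
move=> gc godd g0c g0odd nz; exists (g d0 / g0 d0) => d.
pose h x := g x - g d0 / g0 d0 * g0 x.
have hc : vert_const h by move=> x y xy; rewrite /h (gc x y xy) (g0c x y xy).
have hodd : edge_odd h by move=> x; rewrite /h godd g0odd mulrN opprD.
have h0 : h d0 = 0 by rewrite /h divfK ?subrr.
apply/eqP; rewrite -subr_eq0 -/(h d).
by case: (edge_odd_sign d0 hc hodd d) => ->; rewrite h0 ?oppr0.
Qed.

Theorem trunc_simple_eigen1 (d0 : D) :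
  simple_eigenvalue (@trunc_adj G) 1 <-> mg_bipartite G.
Proof.
rewrite simple_eigenvalueP; split.
  case=> g [/trunc_eigen1P [gc godd] [d nz] _].
  exact: edge_odd_bipartite gc godd nz.
case/bipartite_sign_fun=> g0 [g0c g0odd nz]; exists g0; split.
- exact/trunc_eigen1P.
- by exists d0.
- move=> g /trunc_eigen1P [gc godd].
  exact: edge_odd_unique gc godd g0c g0odd (nz d0).
Qed.

End Truncation.

Lemma K4_eq0 (R : numDomainType) (a b c d : R) :
  a = b + c + d -> b = a + c + d -> c = a + b + d -> d = a + b + c -> a = 0.
Proof.
move=> /eqP; rewrite -subr_eq0 => /eqP ha /eqP; rewrite -subr_eq0 => /eqP hb.
move=> /eqP; rewrite -subr_eq0 => /eqP hc /eqP; rewrite -subr_eq0 => /eqP hd.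
have : a *+ 4 = (a - (b + c + d)) - (b - (a + c + d))
                 - (c - (a + b + d)) - (d - (a + b + c)) by ring.
by rewrite ha hb hc hd !subr0 => /eqP; rewrite mulrn_eq0 => /eqP.
Qed.

Lemma vertex_transitive_everywhere (T : finType) (e : rel T) (P : T -> Prop) :
  vertex_transitive e -> (forall f x, graph_aut e f -> P x -> P (f x)) ->
  forall x0, P x0 -> forall x, P x.
Proof. by move=> vt_e autP x0 Px0 x; have [f [af <-]] := vt_e x0 x; apply: autP. Qed.

Section CubicGraph.
Variables (T : finType) (e : rel T).
Hypotheses (sym : symmetric e) (irr : irreflexive e) (cub : cubic_graph e).

Lemma adj_neq x y : e x y -> x != y.
Proof. by apply: contraTneq => ->; rewrite irr. Qed.

Lemma nbhd3 x a b c : e x a -> e x b -> e x c -> a != b -> a != c -> b != c ->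
  forall y, e x y = [|| y == a, y == b | y == c].
Proof.
move=> xa xb xc ab ac bc y.
suff /setP/(_ y) : [set y | e x y] = [set a; b; c] by rewrite !inE orbA.
have card_abc : #|[set a; b; c]| = 3%N.
  by rewrite -setUA cardsU1 cards2 !inE bc negb_or ab ac.
apply/eqP; rewrite eq_sym eqEcard cub card_abc leqnn andbT.
by apply/subsetP => z; rewrite !inE -orbA => /or3P [] /eqP ->.
Qed.

Lemma third_nbr x a b : e x a -> e x b -> exists c, [/\ e x c, c != a & c != b].
Proof.
move=> xa xb; have : ~~ ([set y | e x y] \subset [set a; b]).
  by apply/negP => /subset_leq_card; rewrite cub cards2; case: (a != b).
by case/subsetPn => c; rewrite !inE negb_or => xc /andP [ca cb]; exists c.
Qed.

Definition diamond x :=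
  exists a b c, [/\ e x a, e x b, e x c, e a b & e b c] /\ a != c.

Lemma diamond_K4 x a b c : e x a -> e x b -> e x c -> e a b -> e b c -> a != c ->
  diamond a -> e a c.
Proof.
(* The middle vertex q of the diamond at a is adjacent to the two other
   neighbours of a, while N(x) and N(b) lie in {x, a, b, c}. *)
move=> xa xb xc ab bc ac [p [q [r [[ap aq ar pq qr] pr]]]].
have xa' := adj_neq xa; have xb' := adj_neq xb; have ab' := adj_neq ab.
have Nx := nbhd3 xa xb xc ab' ac (adj_neq bc).
have Nb := nbhd3 (etrans (sym b x) xb) (etrans (sym b a) ab) bc xa' (adj_neq xc) ac.
have pa : p != a by rewrite eq_sym adj_neq.
have ra : r != a by rewrite eq_sym adj_neq.
have [qx | qx] := eqVneq q x.
  move: (Nx p) (Nx r); rewrite (sym x p) -qx pq qr (negbTE pa) (negbTE ra) /=.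
  move=> /esym/orP [] /eqP ep /esym/orP [] /eqP er; subst p r => //.
  by rewrite eqxx in pr.
have [qb | qb] := eqVneq q b.
  move: (Nb p) (Nb r); rewrite (sym b p) -qb pq qr (negbTE pa) (negbTE ra) /=.
  move=> /esym/orP [] /eqP ep /esym/orP [] /eqP er; subst p r => //.
  by rewrite eqxx in pr.
have qa : q != a by rewrite eq_sym adj_neq.
have xq : x != q by rewrite eq_sym.
have bq : b != q by rewrite eq_sym.
have Na := nbhd3 (etrans (sym a x) xa) ab aq xb' xq bq.
move: (Na p); rewrite ap (negbTE (adj_neq pq)) orbF => /esym/orP [] /eqP ep; subst p.
  by move: (Nx q); rewrite pq (negbTE qa) (negbTE qb) /= => /esym/eqP <-.
by move: (Nb q); rewrite pq (negbTE qx) (negbTE qa) /= => /esym/eqP <-.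
Qed.

Lemma eigen1_nbhd (f : T -> algC) y p q r : eigenfun e 1 f ->
  e y p -> e y q -> e y r -> p != q -> p != r -> q != r -> f y = f p + f q + f r.
Proof.
move=> ef yp yq yr pq pr qr; rewrite -[f y]mul1r -ef.
have Ny := nbhd3 yp yq yr pq pr qr.
rewrite (eq_bigr (fun z => if z \in [:: p; q; r] then f z else 0)); last first.
  by move=> z _; rewrite sym Ny !inE; case: ifP; rewrite ?mul1r ?mul0r.
rewrite -big_mkcond -big_uniq /= ?inE ?negb_or ?pq ?pr ?qr //.
by rewrite !big_cons big_nil addr0 addrA.
Qed.

Definition in_triangle x := exists a b, [/\ e x a, e x b & e a b].

Lemma in_triangle_aut f x : graph_aut e f -> in_triangle x -> in_triangle (f x).
Proof. by move=> [_ hom] [a [b [xa xb ab]]]; exists (f a), (f b); rewrite !hom. Qed.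

Lemma diamond_aut f x : graph_aut e f -> diamond x -> diamond (f x).
Proof.
move=> [[g fK _] hom] [a [b [c [[xa xb xc ab bc] ac]]]].
by exists (f a), (f b), (f c); rewrite !hom (inj_eq (can_inj fK)).
Qed.

Lemma diamond_eigen1_zero (f : T -> algC) x0 : vertex_transitive e ->
  diamond x0 -> eigenfun e 1 f -> forall x, f x = 0.
Proof.
move=> vt_e Dx0 ef x.
have Dall := vertex_transitive_everywhere vt_e diamond_aut Dx0.
have [a [b [c [[xa xb xc ab bc] ac]]]] := Dall x.
have ca : e c a by rewrite sym (diamond_K4 xa xb xc ab bc ac (Dall a)).
have ax := etrans (sym a x) xa; have bx := etrans (sym b x) xb.
have cx := etrans (sym c x) xc; have ba := etrans (sym b a) ab.
have cb := etrans (sym c b) bc.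
have xa' := adj_neq xa; have xb' := adj_neq xb; have xc' := adj_neq xc.
have ab' := adj_neq ab; have bc' := adj_neq bc.
apply: (K4_eq0 (b := f a) (c := f b) (d := f c)).
- exact: eigen1_nbhd ef xa xb xc ab' ac bc'.
- exact: eigen1_nbhd ef ax ab (etrans (sym a c) ca) xb' xc' bc'.
- exact: eigen1_nbhd ef bx ba bc xa' xc' ac.
- exact: eigen1_nbhd ef cx ca cb xa' xb' ab'.
Qed.

End CubicGraph.

Section TrianglePartition.
Variables (T : finType) (e : rel T).
Hypotheses (sym : symmetric e) (irr : irreflexive e) (cub : cubic_graph e).
Hypothesis no_diamond : forall x, ~ diamond e x.
Hypothesis triangle_everywhere : forall x, in_triangle e x.

Definition tri_nbrs x a b c :=
  [/\ e x a, e x b, e x c, e a b & [/\ a != c, b != c, ~~ e a c & ~~ e b c]].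

Lemma tri_nbrs_exist x : exists a b c, tri_nbrs x a b c.
Proof.
have [a [b [xa xb ab]]] := triangle_everywhere x.
have [c [xc ca cb]] := third_nbr cub xa xb.
exists a, b, c; split=> //; split; rewrite 1?eq_sym //.
- apply/negP => ac; apply: (no_diamond (x := x)).
  by exists b, a, c; rewrite (sym b a) eq_sym.
- apply/negP => bc; apply: (no_diamond (x := x)).
  by exists a, b, c; rewrite eq_sym.
Qed.

Definition same_tri x y := (x == y) || e x y && [exists z, e x z && e y z].

Lemma same_triE x a b c : tri_nbrs x a b c ->
  forall y, same_tri x y = [|| y == x, y == a | y == b].
Proof.
case=> xa xb xc ab [ac bc nac nbc] y.
rewrite /same_tri (eq_sym x y) (nbhd3 cub xa xb xc (adj_neq irr ab) ac bc).
have [// | _] := eqVneq y x; have [-> | _] := eqVneq y a.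
  by apply/existsP; exists b; rewrite xb ab.
have [-> | _] := eqVneq y b; first by apply/existsP; exists a; rewrite xa sym ab.
have [-> /= | //] := eqVneq y c; apply/existsPn => z; apply/andP => [[xz cz]].
move: (nbhd3 cub xa xb xc (adj_neq irr ab) ac bc z); rewrite xz.
case/esym/or3P => /eqP zE; move: cz; rewrite zE ?irr //.
  by rewrite sym (negbTE nac).
by rewrite sym (negbTE nbc).
Qed.

Lemma same_tri_refl x : same_tri x x.
Proof. by rewrite /same_tri eqxx. Qed.

Lemma same_tri_sym x y : same_tri x y = same_tri y x.
Proof.
rewrite /same_tri eq_sym sym; congr (_ || (_ && _)).
by apply/existsP/existsP => [] [z /andP [h1 h2]]; exists z; rewrite h1 h2.
Qed.

Lemma same_tri_trans y x z : same_tri x y -> same_tri y z -> same_tri x z.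
Proof.
have [a [b [c Ty]]] := tri_nbrs_exist y.
have [ya yb _ ab _] := Ty.
have Tab : same_tri a b.
  rewrite /same_tri ab; apply/orP; right.
  by apply/existsP; exists y; rewrite !(sym _ y) ya yb.
have Tyu u : u \in [:: y; a; b] -> same_tri y u by rewrite (same_triE Ty) !inE orbA.
rewrite same_tri_sym !(same_triE Ty) => /or3P [] /eqP -> /or3P [] /eqP ->;
  rewrite ?same_tri_refl ?Tab ?Tyu ?inE ?eqxx ?orbT //.
all: rewrite same_tri_sym ?Tab ?Tyu ?inE ?eqxx ?orbT //.
Qed.

Definition tri x := [set y | same_tri x y].

Lemma tri_eq x y : (tri x == tri y) = same_tri x y.
Proof.
apply/eqP/idP => [tri_xy | xy].
  have : y \in tri y by rewrite inE same_tri_refl.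
  by rewrite -tri_xy inE.
apply/setP => z; rewrite !inE; apply/idP/idP; last exact: same_tri_trans.
by apply: same_tri_trans; rewrite same_tri_sym.
Qed.

Lemma card_tri x : #|tri x| = 3%N.
Proof.
have [a [b [c Tx]]] := tri_nbrs_exist x; have [xa xb _ ab _] := Tx.
have -> : tri x = [set x; a; b] by apply/setP => y; rewrite !inE (same_triE Tx) orbA.
rewrite -setUA cardsU1 cards2 !inE negb_or (adj_neq irr ab) (adj_neq irr xa).
by rewrite (adj_neq irr xb).
Qed.

Definition tri_out x := odflt x [pick y | e x y && ~~ same_tri x y].

Lemma out_nbr_uniq x a b c : tri_nbrs x a b c ->
  forall y, e x y -> ~~ same_tri x y -> y = c.
Proof.
move=> Tx y xy; have [xa xb xc ab [ac bc _ _]] := Tx.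
rewrite (same_triE Tx) !negb_or => /and3P [_ ya yb].
move: (nbhd3 cub xa xb xc (adj_neq irr ab) ac bc y); rewrite xy.
by case/esym/or3P => /eqP // yE; rewrite yE eqxx in ya yb.
Qed.

Lemma tri_out_spec x : e x (tri_out x) && ~~ same_tri x (tri_out x).
Proof.
rewrite /tri_out; case: pickP => [y // | none].
have [a [b [c Tx]]] := tri_nbrs_exist x.
have [_ _ xc _ [ac bc _ _]] := Tx.
move: (none c); rewrite xc (same_triE Tx) !negb_or eq_sym (adj_neq irr xc).
by rewrite eq_sym ac eq_sym bc.
Qed.

Lemma tri_out_uniq x y : e x y -> ~~ same_tri x y -> y = tri_out x.
Proof.
have [a [b [c Tx]]] := tri_nbrs_exist x; have /andP [xo no] := tri_out_spec x.
by move=> xy ny; rewrite (out_nbr_uniq Tx xy ny) (out_nbr_uniq Tx xo no).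
Qed.

Lemma tri_outK : involutive tri_out.
Proof.
move=> x; have /andP [xo no] := tri_out_spec x.
by apply/esym/tri_out_uniq; rewrite 1?sym 1?same_tri_sym.
Qed.

Lemma adj_tri_out d d' : ((d != d') && same_tri d d') || (tri_out d == d') = e d d'.
Proof.
have /andP [dout _] := tri_out_spec d.
have [dd' | ndd'] := boolP (e d d').
  case Tdd': (same_tri d d'); first by rewrite (adj_neq irr dd').
  by rewrite -(tri_out_uniq dd' (negbT Tdd')) eqxx orbT.
apply/negbTE; rewrite negb_or; apply/andP; split.
  by apply/negP => /andP [nd]; rewrite /same_tri (negbTE nd) (negbTE ndd').
by apply: contraNneq ndd' => <-.
Qed.

Section Automorphisms.
Variable f : T -> T.
Hypothesis aut_f : graph_aut e f.

Lemma same_tri_aut x y : same_tri (f x) (f y) = same_tri x y.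
Proof.
have [[g fK gK] hom] := aut_f; rewrite /same_tri (inj_eq (can_inj fK)) hom.
congr (_ || (_ && _)); apply/existsP/existsP => [] [z /andP [xz yz]].
  by exists (g z); rewrite -(hom x) -(hom y) gK xz yz.
by exists (f z); rewrite !hom xz yz.
Qed.

Lemma tri_aut x : f @: tri x = tri (f x).
Proof.
have [[g fK gK] _] := aut_f; apply/setP => z.
rewrite -{1}(gK z) (mem_imset _ _ (can_inj fK)) !inE.
by rewrite -[in RHS](gK z) same_tri_aut.
Qed.

Lemma tri_out_aut x : tri_out (f x) = f (tri_out x).
Proof.
have [_ hom] := aut_f; have /andP [xo no] := tri_out_spec x.
by apply/esym/tri_out_uniq; rewrite ?hom ?same_tri_aut.
Qed.

End Automorphisms.

(* The vertices of G are the triangles of X, its darts the vertices of X. *)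
Definition tri_vert := {A : {set T} | [exists y, A == tri y]}.
Definition vert_of x : tri_vert :=
  exist _ (tri x) (introT existsP (ex_intro _ x (eqxx (tri x)))).
Definition tri_graph := MGraph vert_of tri_out.

Lemma vert_of_eq d d' : (vert_of d == vert_of d') = same_tri d d'.
Proof. by rewrite -val_eqE tri_eq. Qed.

Lemma vert_of_surj (w : tri_vert) : exists y, w = vert_of y.
Proof. by case: w => A /[dup] /existsP [y /eqP Ay] HA; exists y; apply: val_inj. Qed.

Lemma tri_graph_cubic : cubic_mgraph tri_graph.
Proof.
split=> [| d | w] /=; first exact: tri_outK.
  by have /andP [dout _] := tri_out_spec d; rewrite eq_sym (adj_neq irr dout).
have [y ->] := vert_of_surj w; rewrite -(card_tri y); apply: eq_card => d.
by rewrite !inE vert_of_eq same_tri_sym.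
Qed.

Lemma tri_graph_loopless d : @mg_vert tri_graph (mg_alpha d) != mg_vert d.
Proof. by rewrite /= vert_of_eq same_tri_sym; case/andP: (tri_out_spec d). Qed.

Lemma trunc_tri_graph : @trunc_adj tri_graph =2 e.
Proof. by move=> d d'; rewrite /trunc_adj /= vert_of_eq adj_tri_out. Qed.

Lemma tri_graph_connected : connected_graph e -> mg_connected tri_graph.
Proof.
move=> conn u v; have [x ->] := vert_of_surj u; have [y ->] := vert_of_surj v.
pose P z := connect (@mg_adj tri_graph) (vert_of x) (vert_of z).
apply: (@connect_invariant _ e P) (conn x y) (connect0 _ _) => z w zw Pz.
apply: connect_trans Pz _; have [Tzw | nTzw] := boolP (same_tri z w).
  by apply/eq_connect0/eqP; rewrite vert_of_eq.
by apply/connect1/existsP; exists z; rewrite (tri_out_uniq zw nTzw) !eqxx.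
Qed.

Lemma tri_graph_arc_transitive : vertex_transitive e -> mg_arc_transitive tri_graph.
Proof.
move=> vt_e d d'; have [f [aut_f <-]] := vt_e d d'; have [[g fK gK] _] := aut_f.
pose fv (v : tri_vert) : tri_vert := insubd v (f @: val v).
have fvE (v : tri_vert) : val (fv v) = f @: val v.
  case: v => A HA; rewrite /fv insubdK //=; have /existsP [y /eqP Ay] := HA.
  by apply/existsP; exists (f y); rewrite Ay tri_aut.
exists fv, f; split=> //; split.
- apply: injF_bij => v w /(congr1 val); rewrite !fvE.
  by move=> /(imset_inj (can_inj fK)) vw; apply: val_inj.
- by exists g.
- by move=> x; apply: val_inj; rewrite fvE /= tri_aut.
- by move=> x /=; rewrite tri_out_aut.
Qed.

End TrianglePartition.

Lemma bipartite_loopless (G : mgraph) :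
  mg_bipartite G -> forall d, mg_vert (@mg_alpha G d) != mg_vert d.
Proof. by case=> c cE d; apply: contra (cE d) => /eqP ->. Qed.

Theorem corollary6p4 (T : finType) (e : rel T) :
  simple_graph e -> cubic_graph e -> connected_graph e ->
  vertex_transitive e -> has_triangle e ->
  (simple_eigenvalue e 1%R <->
   exists G : mgraph,
     [/\ cubic_mgraph G, mg_connected G, mg_bipartite G,
         mg_arc_transitive G & graph_iso e (@trunc_adj G)]).
Proof.
move=> [sym irr] cub conn vt_e [x0 [y0 [z0 [xy yz zx]]]]; split=> [simple_e | ].
  have no_diamond x : ~ diamond e x.
    have /simple_eigenvalueP [f [ef [y nz_fy] _]] := simple_e.
    by move=> Dx; rewrite (diamond_eigen1_zero sym irr cub vt_e Dx ef) eqxx in nz_fy.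
  have triangles : forall x, in_triangle e x.
    apply: (vertex_transitive_everywhere vt_e (@in_triangle_aut _ e) (x0 := x0)).
    by exists y0, z0; rewrite xy yz sym.
  have cubG := tri_graph_cubic sym irr cub no_diamond triangles.
  have loopG := tri_graph_loopless sym irr cub no_diamond triangles.
  have connG := tri_graph_connected sym irr cub no_diamond triangles conn.
  have iso : graph_iso e (@trunc_adj (tri_graph e)).
    by exists id; split=> [| x y]; [exists id | rewrite trunc_tri_graph].
  exists (tri_graph e); split=> //; last exact: tri_graph_arc_transitive.
  apply: (proj1 (trunc_simple_eigen1 cubG loopG connG x0)).
  exact: (proj1 (simple_eigenvalue_iso 1 iso) simple_e).
case=> G [cubG connG bipG _ iso]; have [phi _] := iso.
apply: (proj2 (simple_eigenvalue_iso 1 iso)).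
exact: (proj2 (trunc_simple_eigen1 cubG (bipartite_loopless bipG) connG (phi x0)) bipG).
Qed.
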